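(* Let $T\in\{0,1\}^{\mathbb N}$ and let $\widetilde x_0=(x_0,x_1,\dots)\in\widetilde X_T$ be such that $x_n=0$ for some $n\in\mathbb N$, so that $\widetilde x_0=(f^n(0),f^{n-1}(0),\dots,f(0),0,\dots)$ and $T(n)=0$. Let $T'\in\{0,1\}^{\mathbb N}$ satisfy $T'(k)=T(k)$ for $k\ne n$ and $T'(n)=1$. Then every neighborhood of $\widetilde x_0$ in $\widetilde X$ contains, for some $\varepsilon>0$, the set $$\{\widetilde x=(x_0',x_1',\dots)\in\widetilde X_{T'}:\ x_0'\in(f^n(0)-\varepsilon,f^n(0)+\varepsilon)\}.$$
   Context: Standing setup. Fix real numbers $\rho,\delta,\gamma,\alpha$ with $0<\rho<1$, $\delta>0$, $\gamma>-\delta/\rho$, $-\delta/\rho<\alpha<0$. Define $f:[0,1]\to[0,1]$ by $f(x)=f_0(x):=\frac{\alpha x-\alpha\rho}{\gamma x+\delta}$ for $x\in[0,\rho]$ and $f(x)=f_1(x):=\frac{x-\rho}{1-\rho}$ for $x\in(\rho,1]$. Put $\rho_1:=f_0(0)$. Then $f_0$ is a decreasing bijection $[0,\rho]\to[0,\rho_1]$ and $f_1$ is an increasing bijection $(\rho,1]\to(0,1]$; write $f_0^{-1}:[0,\rho_1]\to[0,\rho]$ and $f_1^{-1}:(0,1]\to(\rho,1]$. The inverse limit is $\widetilde X=\{(x_0,x_1,\dots)\in[0,1]^{\mathbb N}: f(x_{n+1})=x_n \ \forall n\}$ with the product topology. A point $\widetilde x=(x_0,x_1,\dots)\in\widetilde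 X$ is of type $T\in\{0,1\}^{\mathbb N}$ if $x_{n+1}=f_{T(n)}^{-1}(x_n)$ for all $n$ (i.e. $x_{n+1}\in[0,\rho]$ when $T(n)=0$ and $x_{n+1}\in(\rho,1]$ when $T(n)=1$); $\widetilde X_T$ denotes the set of points of type $T$. *)

From HB Require Import structures.
From mathcomp Require Import all_boot all_order all_algebra.
From mathcomp Require Import all_classical all_reals all_analysis.
Set Implicit Arguments. Unset Strict Implicit. Unset Printing Implicit Defensive.
Import Order.TTheory GRing.Theory Num.Theory.
Local Open Scope ring_scope.
Local Open Scope classical_set_scope.

Section Defs.
Variable R : realType.
Variables (rho delta gamma alpha : R).

Definition params_ok : Prop :=
  [/\ 0 < rho < 1, 0 < delta, - (delta / rho) < gamma
    & - (delta / rho) < alpha < 0].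

Definition f0 (x : R) : R := (alpha * x - alpha * rho) / (gamma * x + delta).
Definition f1 (x : R) : R := (x - rho) / (1 - rho).
Definition fdyn (x : R) : R := if x <= rho then f0 x else f1 x.

Definition invlim : set (nat -> R) :=
  [set x | (forall n, 0 <= x n <= 1) /\ (forall n, fdyn (x n.+1) = x n)].

(* points of type T : x_{n+1} = f_{T(n)}^{-1}(x_n), i.e. x_{n+1} in [0,rho]
   when T(n)=0 (false) and x_{n+1} in (rho,1] when T(n)=1 (true) *)
Definition of_type (T : nat -> bool) : set (nat -> R) :=
  [set x | invlim x /\
     (forall n, if T n then rho < x n.+1 <= 1 else 0 <= x n.+1 <= rho)].

End Defs.

From HB Require Import structures.
From mathcomp Require Import all_boot all_order all_algebra.
From mathcomp Require Import all_classical all_reals all_analysis.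
From mathcomp Require Import ring lra zify.
Set Implicit Arguments. Unset Strict Implicit.
Import Order.TTheory GRing.Theory Num.Theory numFieldNormedType.Exports.
Local Open Scope ring_scope.
Local Open Scope classical_set_scope.

(* Both branches of f have Lipschitz inverses, so for two points x, y of the
   inverse limit whose coordinates x_{k+1}, y_{k+1} always lie in a common
   closed branch, |x_k - y_k| <= L^k |x_0 - y_0|.  This applies to x0 and any
   point of type T': off the index n the types agree, and at n the coordinate
   of x0 is f_0^{-1}(0) = rho, which also lies in the closed branch [rho, 1]
   of f_1.  Such points therefore converge to x0 coordinatewise, i.e. in the
   product topology, as their 0-th coordinate tends to f^n(0). *)

Lemma ptws_nbhs_controlled (R : realType) (x0 : {ptws nat -> R})
    (P : set (nat -> R)) (d : (nat -> R) -> R) (C : nat -> R) (U : set (nat -> R)) :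
  (forall k, 0 < C k) ->
  (forall y, P y -> forall k, `|y k - x0 k| <= C k * d y) ->
  nbhs x0 U -> exists2 e : R, 0 < e & forall y, P y -> d y < e -> U y.
Proof.
move=> C_gt0 P_le.
pose S (e : R) := [set y : {ptws nat -> R} | P y /\ d y < e].
pose G := filter_from [set e : R | 0 < e] S.
have G_filter : Filter G.
  apply: filter_from_filter; first by exists 1; rewrite /= ltr01.
  move=> i j /= i0 j0; exists (Num.min i j); first by rewrite /= lt_min i0 j0.
  by move=> y [Py]; rewrite lt_min => /andP[].
have G_cvg : G --> x0.
  apply/pointwise_cvgP => k; apply/cvgrPdist_lt => eps eps0.
  exists (eps / C k); first by rewrite /= divr_gt0.
  move=> y [Py dy] /=; rewrite distrC; apply: le_lt_trans (P_le y Py k) _.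
  by rewrite -ltr_pdivlMl // mulrC.
move=> /G_cvg [e /= e0 SU]; exists e => // y Py dy.
exact: SU (conj Py dy).
Qed.

Section Branches.
Variables (R : realType) (rho delta gamma alpha : R).
Hypothesis Hpar : params_ok rho delta gamma alpha.

Let f := fdyn rho delta gamma alpha.

Lemma rho_lt1 : rho < 1. Proof. by case: Hpar => /andP[]. Qed.
Lemma alpha_lt0 : alpha < 0. Proof. by case: Hpar => _ _ _ /andP[]. Qed.

Lemma addr_delta_rho_gamma_gt0 : 0 < delta + rho * gamma.
Proof.
case: Hpar => /andP[r0 _] _ hg _.
have : rho * (- (delta / rho)) < rho * gamma by rewrite ltr_pM2l.
by rewrite mulrN mulrCA divff ?mulr1 ?gt_eqF //; lra.
Qed.

Lemma f0_den_gt0 a : 0 <= a <= rho -> 0 < gamma * a + delta.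
Proof.
move=> /andP[a0 ar]; have := addr_delta_rho_gamma_gt0.
case: Hpar => _ d0 _ _.
have [g0|g0] := lerP 0 gamma.
  have : 0 <= gamma * a by rewrite mulr_ge0.
  lra.
have : gamma * rho <= gamma * a by rewrite ler_nM2l.
lra.
Qed.

Lemma f0_den_le a : 0 <= a <= rho -> gamma * a + delta <= delta + `|gamma|.
Proof.
move=> /andP[a0 ar]; have r1 := rho_lt1.
have : gamma * a <= `|gamma| * a by rewrite ler_wpM2r // ler_norm.
have : `|gamma| * a <= `|gamma| by rewrite ler_piMr //; lra.
lra.
Qed.

Lemma f0B a b : 0 <= a <= rho -> 0 <= b <= rho ->
  f0 rho delta gamma alpha a - f0 rho delta gamma alpha b =
  alpha * (delta + rho * gamma) * (a - b) / ((gamma * a + delta) * (gamma * b + delta)).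
Proof.
move=> /f0_den_gt0 da /f0_den_gt0 db.
by rewrite /f0; field; rewrite !gt_eqF.
Qed.

(* Each factor of the denominator in [f0B] lies in (0, delta + |gamma|]. *)
Definition f0_inv_lip := (delta + `|gamma|) ^+ 2 / (- alpha * (delta + rho * gamma)).

Lemma f0_inv_lip_gt0 : 0 < f0_inv_lip.
Proof.
have := addr_delta_rho_gamma_gt0; have := alpha_lt0.
case: Hpar => _ d0 _ _ a0 h.
have hm : 0 < delta + `|gamma| by have := normr_ge0 gamma; lra.
rewrite /f0_inv_lip divr_gt0 ?exprn_gt0 // mulr_gt0 //; lra.
Qed.

Lemma f0_inv_lipschitz a b : 0 <= a <= rho -> 0 <= b <= rho ->
  `|a - b| <= f0_inv_lip * `|f0 rho delta gamma alpha a - f0 rho delta gamma alpha b|.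
Proof.
move=> ha hb; rewrite f0B //.
have hrg := addr_delta_rho_gamma_gt0; have a0 := alpha_lt0.
set D := (gamma * a + delta) * (gamma * b + delta).
have D_gt0 : 0 < D by rewrite mulr_gt0 // f0_den_gt0.
have D_le : D <= (delta + `|gamma|) ^+ 2.
  by rewrite expr2 ler_pM ?f0_den_le // ltW // f0_den_gt0.
rewrite !normrM normrV ?unitfE ?gt_eqF // (gtr0_norm D_gt0) (ltr0_norm a0).
rewrite (gtr0_norm hrg) /f0_inv_lip.
have -> : (delta + `|gamma|) ^+ 2 / (- alpha * (delta + rho * gamma)) *
    (- alpha * (delta + rho * gamma) * `|a - b| / D) =
    (delta + `|gamma|) ^+ 2 * `|a - b| / D.
  by field; rewrite (lt_eqF a0) !gt_eqF.
by rewrite ler_pdivlMr // mulrC ler_wpM2r.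
Qed.

Lemma f1B a b : f1 rho a - f1 rho b = (a - b) / (1 - rho).
Proof. by have := rho_lt1; rewrite /f1 => r1; field; rewrite subr_eq0 gt_eqF. Qed.

Lemma f1_inv_lipschitz a b : `|a - b| = (1 - rho) * `|f1 rho a - f1 rho b|.
Proof.
have r1 : 0 < 1 - rho by rewrite subr_gt0 rho_lt1.
by rewrite f1B normrM normrV ?unitfE ?gt_eqF // (gtr0_norm r1) mulrCA divff ?mulr1 ?gt_eqF.
Qed.

Lemma fdyn_le_rho y : y <= rho -> f y = f0 rho delta gamma alpha y.
Proof. by rewrite /f /fdyn => ->. Qed.

(* At rho both formulas vanish. *)
Lemma fdyn_ge_rho y : rho <= y -> f y = f1 rho y.
Proof.
rewrite /f /fdyn le_eqVlt => /orP[/eqP <-|/lt_geF -> //].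
by rewrite lexx /f0 /f1 !subrr !mul0r.
Qed.

Lemma fdyn_eq0 y : 0 <= y <= 1 -> f y = 0 -> y = rho.
Proof.
move=> /andP[y0 y1]; have [yr|ry] := lerP y rho.
  rewrite fdyn_le_rho // /f0 -mulrBr => /eqP.
  rewrite mulf_eq0 invr_eq0 (gt_eqF (f0_den_gt0 _)) ?yr ?y0 // orbF mulf_eq0.
  by rewrite lt_eqF ?alpha_lt0 //= subr_eq0 => /eqP.
rewrite fdyn_ge_rho ?ltW // /f1 => /eqP.
by rewrite mulf_eq0 invr_eq0 !subr_eq0 => /orP[] /eqP; have := rho_lt1; lra.
Qed.

Definition branch (b : bool) : set R :=
  [set y | if b then rho <= y <= 1 else 0 <= y <= rho].

Definition branch_inv_lip := 1 - rho + f0_inv_lip.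

Lemma branch_inv_lip_gt0 : 0 < branch_inv_lip.
Proof. by have := f0_inv_lip_gt0; have := rho_lt1; rewrite /branch_inv_lip; lra. Qed.

Lemma branch_inv_lipschitz b y z : branch b y -> branch b z ->
  `|y - z| <= branch_inv_lip * `|f y - f z|.
Proof.
move=> hy hz; have L0 := f0_inv_lip_gt0; have r1 := rho_lt1.
have h0 : 0 <= f0_inv_lip * `|f y - f z| by rewrite mulr_ge0 // ltW.
have h1 : 0 <= (1 - rho) * `|f y - f z| by rewrite mulr_ge0 // subr_ge0 ltW.
rewrite /branch_inv_lip mulrDl; case: b hy hz => /= hy hz.
  move: hy hz h0 h1 => /andP[y0 _] /andP[z0 _].
  by rewrite !fdyn_ge_rho // (f1_inv_lipschitz y z); lra.
have := f0_inv_lipschitz hy hz.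
by move: hy hz h0 h1 => /andP[_ y0] /andP[_ z0]; rewrite -!fdyn_le_rho //; lra.
Qed.

Lemma of_type_branch T x k : of_type rho delta gamma alpha T x -> branch (T k) (x k.+1).
Proof.
case=> _ /(_ k); rewrite /branch /=.
by case: (T k) => // /andP[/ltW -> ->].
Qed.

Lemma invlim_dist_le x y :
  invlim rho delta gamma alpha x -> invlim rho delta gamma alpha y ->
  (forall k, exists b, branch b (x k.+1) /\ branch b (y k.+1)) ->
  forall k, `|x k - y k| <= branch_inv_lip ^+ k * `|x 0%N - y 0%N|.
Proof.
move=> [_ fx] [_ fy] common; elim=> [|k IH]; first by rewrite expr0 mul1r.
have [b [bx by_]] := common k.
apply: le_trans (branch_inv_lipschitz bx by_) _.
rewrite /f fx fy exprS -mulrA ler_wpM2l // ltW //.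
exact: branch_inv_lip_gt0.
Qed.

Lemma invlim_iter_zero x n : invlim rho delta gamma alpha x -> x n = 0 ->
  x 0%N = iter n f 0.
Proof.
case=> _ fx xn; suff H j : (j <= n)%N -> x (n - j)%N = iter j f 0.
  by rewrite -(H n) // subnn.
elim: j => [|j IH] hj; first by rewrite subn0.
rewrite iterS -IH ?(ltnW hj) // /f.
have -> : (n - j = (n - j.+1).+1)%N by lia.
by rewrite fx.
Qed.

End Branches.

Theorem lemma3 (R : realType) (rho delta gamma alpha : R)
  (Hpar : params_ok rho delta gamma alpha)
  (T : nat -> bool) (x0 : nat -> R) (n : nat)
  (Hx0 : of_type rho delta gamma alpha T x0) (Hxn : x0 n = 0) :
  let T' := fun k : nat => if k == n then true else T k in
  forall U : set {ptws nat -> R},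
    within (invlim rho delta gamma alpha) (nbhs (x0 : {ptws nat -> R})) U ->
    exists2 eps : R, 0 < eps &
      forall x : nat -> R, of_type rho delta gamma alpha T' x ->
        `| x 0%N - iter n (fdyn rho delta gamma alpha) 0 | < eps -> U x.
Proof.
move=> T' U hU; have [inv_x0 _] := Hx0.
rewrite -(invlim_iter_zero inv_x0 Hxn).
have x0_next : x0 n.+1 = rho.
  by case: inv_x0 => x0_01 fx0; apply: (fdyn_eq0 Hpar); [exact: x0_01 | rewrite fx0].
have close x : of_type rho delta gamma alpha T' x ->
    forall k, `|x k - x0 k| <= branch_inv_lip rho delta gamma alpha ^+ k * `|x 0%N - x0 0%N|.
  move=> Tx; apply: invlim_dist_le => //; first by case: Tx.
  move=> k; exists (T' k); split; first exact: of_type_branch Tx.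
  rewrite /T'; case: eqP => [->|_]; last exact: of_type_branch Hx0.
  by rewrite x0_next /branch /= lexx ltW ?(rho_lt1 Hpar).
have [e e0 hV] := ptws_nbhs_controlled (fun k => exprn_gt0 k (branch_inv_lip_gt0 Hpar)) close hU.
by exists e => // x Tx hx; apply: hV => //; case: Tx.
Qed.
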